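(* Every cubic graph of tree-width at most 3 contains a triangle, a copy of $K_{2,3}$, or a copy of the domino as a subgraph.
   Context: All graphs are finite and simple; cubic means 3-regular. The domino is the $2\times 3$ grid graph: vertices $a_1,a_2,a_3,b_1,b_2,b_3$ and edges $a_1a_2,a_2a_3,b_1b_2,b_2b_3,a_1b_1,a_2b_2,a_3b_3$. *)

From mathcomp Require Import all_boot.
Set Implicit Arguments. Unset Strict Implicit. Unset Printing Implicit Defensive.

Definition simple_graph (T : finType) (e : rel T) : Prop :=
  symmetric e /\ irreflexive e.

Definition cubic (T : finType) (e : rel T) : Prop :=
  forall v : T, #|[set w | e v w]| = 3.

Definition is_tree (I : finType) (t : rel I) : Prop :=
  [/\ simple_graph t, 0 < #|I|,
      (forall i j : I, connect t i j) &
      (forall c : seq I, uniq c -> 3 <= size c -> ~~ cycle t c)].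

Definition tree_decomposition (T : finType) (e : rel T)
    (I : finType) (t : rel I) (B : I -> {set T}) : Prop :=
  [/\ is_tree t,
      (forall v : T, exists i : I, v \in B i),
      (forall u v : T, e u v -> exists i : I, (u \in B i) && (v \in B i)) &
      (forall (v : T) (i j : I), v \in B i -> v \in B j ->
         connect [rel x y | [&& t x y, v \in B x & v \in B y]] i j)].

(* Width of a decomposition is (max bag size) - 1; tree-width <= k iff
   some tree decomposition has all bags of size at most k+1. *)
Definition treewidth_le (T : finType) (e : rel T) (k : nat) : Prop :=
  exists (I : finType) (t : rel I) (B : I -> {set T}),
    tree_decomposition e t B /\ forall i : I, #|B i| <= k.+1.

Definition has_triangle (T : finType) (e : rel T) : Prop :=
  exists a b c : T, [/\ uniq [:: a; b; c], e a b, e b c & e a c].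

Definition has_K23 (T : finType) (e : rel T) : Prop :=
  exists x1 x2 y1 y2 y3 : T,
    uniq [:: x1; x2; y1; y2; y3] /\
    [/\ e x1 y1, e x1 y2 & e x1 y3] /\ [/\ e x2 y1, e x2 y2 & e x2 y3].

(* Domino = 2x3 grid: a1a2, a2a3, b1b2, b2b3, a1b1, a2b2, a3b3. *)
Definition has_domino (T : finType) (e : rel T) : Prop :=
  exists a1 a2 a3 b1 b2 b3 : T,
    uniq [:: a1; a2; a3; b1; b2; b3] /\
    [/\ e a1 a2, e a2 a3, e b1 b2 & e b2 b3] /\ [/\ e a1 b1, e a2 b2 & e a3 b3].

From mathcomp Require Import all_boot zify.
From Stdlib Require Import Classical.
Set Implicit Arguments. Unset Strict Implicit. Unset Printing Implicit Defensive.

(* Assume G contains none of the three graphs.  A vertex whose neighbours all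
   lie in a 4-set X is adjacent to all of X but one vertex; two vertices missing
   the same vertex span a K_{2,3}, and two adjacent ones inside X span a triangle.
   Key lemma: if |X| <= 4 and W is a vertex set whose vertices outside X have all
   their neighbours in X, while those in X have theirs in X u W, then W is
   independent.  For r in W n X with a neighbour u outside X, N(u) = X - c, the two
   other neighbours of r are not adjacent to u; one of them inside X would be c and
   adjacent to the other, giving a triangle, and if both are outside X the three
   outside neighbours of r miss distinct vertices of X and span a domino.  Hence
   every vertex of W has its neighbourhood in X, and an edge in W is a triangle.
   In a tree decomposition with bags of size at most 4, induction on the branch
   beyond a tree edge jp (X = bag of j, W = vertices occurring beyond jp but not in
   the bag of p) shows that these vertices have all their neighbours in the bag of
   p.  The key lemma at a root bag with W = V(G) then shows that G has no edge,
   contradicting cubicity. *)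

Lemma connect_ind (T : finType) (r : rel T) (P : T -> Prop) x :
  P x -> (forall y z, connect r x y -> P y -> r y z -> P z) ->
  forall y, connect r x y -> P y.
Proof.
move=> Px step y /connectP [p pth ->].
elim/last_ind: p pth => [|p z IH] //.
rewrite rcons_path last_rcons => /andP [pth rz].
by apply: step rz; [apply/connectP; exists p | exact: IH].
Qed.

Lemma superset_card (T : finType) (X : {set T}) n :
  #|X| <= n <= #|T| -> exists2 Y : {set T}, X \subset Y & #|Y| = n.
Proof.
move=> /andP [Xn nT].
have : n - #|X| <= #|~: X| by have := cardsC X; lia.
case/card_geqP => s [uniq_s size_s sXC].
exists (X :|: [set x in s]); first exact: subsetUl.
have disj : X :&: [set x in s] = set0.
  by apply/setP => x; rewrite !inE; apply/andP => -[xX /sXC]; rewrite inE xX.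
by rewrite cardsU disj cards0 cardsE (card_uniqP uniq_s) size_s; lia.
Qed.

Section Branches.

Variables (I : finType) (t : rel I).
Hypothesis tree_t : is_tree t.

Definition tree_del (a b : I) : rel I :=
  [rel x y | t x y && ~~ [|| (x == a) && (y == b) | (x == b) && (y == a)]].

Definition branch (i j : I) : {set I} := [set k | connect (tree_del i j) i k].

Lemma branch_root i j : i \in branch i j.
Proof. by rewrite inE connect0. Qed.

Lemma branch_notin i j : t i j -> j \notin branch i j.
Proof.
have [[tsym tirr] _ _ acyclic] := tree_t.
move=> tij; rewrite inE; apply/negP => /connectP [p pth lastj].
case: (shortenP pth) lastj => {pth}p pth uniq_p _ lastj.
have ij : i != j by apply: contraTneq tij => ->; rewrite tirr.
have size_p : 3 <= size (i :: p).
  case: p pth {uniq_p} lastj => [|y [|z p]] //=; first by move=> _ ji; rewrite ji eqxx in ij.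
  by rewrite andbT => /andP [_ +] ji; rewrite -ji !eqxx.
apply: (negP (acyclic _ uniq_p size_p)).
rewrite /cycle rcons_path -lastj tsym tij andbT.
by apply: sub_path pth => x y /andP [].
Qed.

Lemma branch_proper j p k :
  t j p -> t j k -> k != p -> branch k j \proper branch j p.
Proof.
have [[tsym tirr] _ _ _] := tree_t.
move=> tjp tjk kp.
have := @branch_notin k j; rewrite inE tsym => /(_ tjk) jNkj.
apply/properP; split; last by exists j; rewrite ?branch_root ?inE.
apply/subsetP => x; rewrite [x \in _]inE => /(connect_ind (P := connect (tree_del j p) k)) kx.
rewrite inE; apply: (@connect_trans _ _ k); first apply: connect1.
  have jp : j != p by apply: contraTneq tjp => ->; rewrite tirr.
  by rewrite /tree_del /= tjk eqxx (negbTE kp) (negbTE jp).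
apply: kx => // a b ka kpa ab; apply: (connect_trans kpa); apply: connect1.
have aj : a != j by apply: contraTneq ka => ->.
have bj : b != j by apply: contraTneq (connect_trans ka (connect1 ab)) => ->.
by case/andP: ab => tab _; rewrite /tree_del /= tab (negbTE aj) (negbTE bj) !andbF.
Qed.

Lemma branch_cover (r : rel I) j x :
  subrel r t -> connect r j x -> x != j -> exists2 k, r j k & x \in branch k j.
Proof.
have [[tsym _] _ _ _] := tree_t.
move=> rt jx; suff : x = j \/ exists2 k, r j k & x \in branch k j.
  by case=> // ->; rewrite eqxx.
apply: (connect_ind (P := fun x => x = j \/ exists2 k, r j k & x \in branch k j)) jx.
  by left.
move=> a b _ [-> | [k rjk ak]] rab; first by right; exists b => //; apply: branch_root.
have [-> | bj] := eqVneq b j; [by left | right; exists k => //].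
have aj : a != j.
  by apply: contraTneq ak => ->; apply: branch_notin; rewrite tsym rt.
move: ak; rewrite !inE => ak; apply: (connect_trans ak); apply: connect1.
by rewrite /tree_del /= rt // (negbTE aj) (negbTE bj) !andbF.
Qed.

End Branches.

Definition nbhd (T : finType) (e : rel T) (v : T) : {set T} := [set w | e v w].

Lemma in_nbhd (T : finType) (e : rel T) v w : (w \in nbhd e v) = e v w.
Proof. by rewrite inE. Qed.

Section CubicGraph.

Variables (T : finType) (e : rel T).
Hypotheses (simple_e : simple_graph e) (cubic_e : cubic e).

Lemma edge_neq x y : e x y -> x != y.
Proof. by case: simple_e => _ irr; apply: contraTneq => ->; rewrite irr. Qed.

Lemma card_nbhd v : #|nbhd e v| = 3.
Proof. exact: cubic_e. Qed.

Lemma four_le_card (v : T) : 4 <= #|T|.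
Proof.
case: simple_e => _ irr; have := max_card (mem (v |: nbhd e v)).
by rewrite cardsU1 card_nbhd inE irr.
Qed.

Lemma nbhd_sub4 (X : {set T}) v :
  #|X| = 4 -> nbhd e v \subset X -> exists2 c, c \in X & nbhd e v = X :\ c.
Proof.
move=> X4 sub; have : #|X :\: nbhd e v| == 1 by rewrite cardsD (setIidPr sub) card_nbhd X4.
case/cards1P => c Ec; exists c; first by have := set11 c; rewrite -Ec inE => /andP [].
by rewrite -Ec setDDr setDv set0U (setIidPr sub).
Qed.

Lemma nbhd_sub4_self (X : {set T}) v :
  #|X| = 4 -> v \in X -> nbhd e v \subset X -> nbhd e v = X :\ v.
Proof.
move=> X4 vX /(nbhd_sub4 X4) [c cX Nv].
suff vc : v = c by rewrite Nv vc.
case: simple_e => _ irr; apply/eqP/negPn/negP => vc.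
have : v \in nbhd e v by rewrite Nv !inE vc vX.
by rewrite inE irr.
Qed.

Lemma has_triangle_of a b c : e a b -> e b c -> e a c -> has_triangle e.
Proof.
move=> eab ebc eac; exists a, b, c; split => //.
by rewrite /= !inE negb_or (edge_neq eab) (edge_neq ebc) (edge_neq eac).
Qed.

Lemma twins_K23 u q : u != q -> nbhd e u = nbhd e q -> has_K23 e.
Proof.
move=> uq Nuq; have : 2 < #|nbhd e u| by rewrite card_nbhd.
case/card_gt2P => y1 [y2 [y3 [[y1N y2N y3N] [y12 y23 y31]]]].
have eu y : y \in nbhd e u -> e u y by rewrite in_nbhd.
have eq y : y \in nbhd e u -> e q y by rewrite Nuq in_nbhd.
exists u, q, y1, y2, y3; split; last by split; split; (apply: eu || apply: eq).
rewrite /= !inE !negb_or uq y12 y23 (eq_sym y1) y31.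
by rewrite !(edge_neq (eu _ _), edge_neq (eq _ _)).
Qed.

Lemma triangle_of_closed_edge (X : {set T}) y z :
  #|X| = 4 -> e y z -> nbhd e y \subset X -> nbhd e z \subset X -> has_triangle e.
Proof.
case: simple_e => esym _ X4 eyz Ny Nz.
have yX : y \in X by apply: (subsetP Nz); rewrite in_nbhd esym.
have zX : z \in X by apply: (subsetP Ny); rewrite in_nbhd.
have /card_gt0P [a] : 0 < #|X :\ y :\ z|.
  have := cardsD1 y X; have := cardsD1 z (X :\ y).
  by rewrite yX !inE zX eq_sym (edge_neq eyz) X4; lia.
rewrite !inE => /and3P [az ay aX].
apply: (has_triangle_of (c := a) eyz).
  by rewrite -in_nbhd (nbhd_sub4_self X4 zX Nz) !inE az aX.
by rewrite -in_nbhd (nbhd_sub4_self X4 yX Ny) !inE ay aX.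
Qed.

Lemma domino_of (X : {set T}) r u q s c c' c'' :
  uniq [:: u; q; s] -> e r u -> e r q -> e r s ->
  u \notin X -> q \notin X -> s \notin X -> c' \in X -> c'' \in X ->
  [/\ c != c', c != c'' & c' != c''] ->
  nbhd e u = X :\ c -> nbhd e q = X :\ c' -> nbhd e s = X :\ c'' -> has_domino e.
Proof.
case: simple_e => esym _ uqs eru erq ers uX qX sX c'X c''X [cc' cc'' c'c''].
have nbhdE w d : nbhd e w = X :\ d -> forall x, e w x = (x != d) && (x \in X).
  by move=> Nw x; rewrite -in_nbhd Nw in_setD1.
move=> /nbhdE Eu /nbhdE Eq /nbhdE Es.
have /andP [_ rX] : (r != c) && (r \in X) by rewrite -Eu esym.
have /andP [rc' _] : (r != c') && (r \in X) by rewrite -Eq esym.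
have /andP [rc'' _] : (r != c'') && (r \in X) by rewrite -Es esym.
have out_neq a b : a \notin X -> b \in X -> a != b.
  by move=> aX bX; apply: contraNneq aX => ->.
move: (edge_neq erq) (edge_neq ers) (edge_neq eru) => rq rs ru.
move: uqs; rewrite /= !inE !negb_or andbT => /andP [/andP [uq us] qs].
exists q, r, s, c'', u, c'; split.
  rewrite /= !inE !negb_or !andbT; do !(apply/andP; split);
    first [done | by rewrite eq_sym | by apply: out_neq | by rewrite eq_sym; apply: out_neq].
split; split=> //.
- by rewrite esym.
- by rewrite esym Eu eq_sym cc'' c''X.
- by rewrite Eu eq_sym cc' c'X.
- by rewrite Eq eq_sym c'c'' c''X.
- by rewrite Es c'c'' c'X.
Qed.

Hypotheses (no_triangle : ~ has_triangle e) (no_K23 : ~ has_K23 e)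
  (no_domino : ~ has_domino e).

Lemma nbhd_sub_of_outer (X : {set T}) r :
  #|X| = 4 -> r \in X ->
  (forall q, q \in nbhd e r :\: X -> nbhd e q \subset X) -> nbhd e r \subset X.
Proof.
case: simple_e => esym _ X4 rX outer.
apply/subsetP => u; rewrite inE => eru; apply/negPn/negP => uX.
have [c cX Nu] : exists2 c, c \in X & nbhd e u = X :\ c.
  by apply/(nbhd_sub4 X4)/outer; rewrite !inE uX eru.
have /cards2P [q [s [qs Nr]]] : #|nbhd e r :\ u| == 2.
  by have := cardsD1 u (nbhd e r); rewrite card_nbhd in_nbhd eru; lia.
have other w : w \in [set q; s] -> [/\ e r w, w != u & ~~ e u w].
  rewrite -Nr !inE => /andP [wu erw]; split=> //.
  by apply/negP => euw; apply: no_triangle; exact: has_triangle_of eru euw erw.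
have inner w : w \in [set q; s] -> w \in X -> w = c.
  case/other => _ _ + wX; apply: contraNeq => wc.
  by rewrite -in_nbhd Nu !inE wc wX.
have outer' w : w \in [set q; s] -> w \notin X ->
    exists2 d, d \in X :\ c & nbhd e w = X :\ d.
  case/other => erw wu _ wX.
  have wN : w \in nbhd e r :\: X by rewrite !inE wX erw.
  have [d dX Nw] := nbhd_sub4 X4 (outer w wN).
  exists d => //; rewrite !inE dX andbT; apply/eqP => dc.
  by apply: no_K23; apply: (twins_K23 wu); rewrite Nw Nu dc.
have mixed w w' : w \in [set q; s] -> w' \in [set q; s] -> w \in X -> w' \notin X -> False.
  move=> wqs w'qs wX w'X; have [erw _ _] := other w wqs; have [erw' _ _] := other w' w'qs.
  have [d /setD1P [dc _] Nw'] := outer' w' w'qs w'X.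
  apply: no_triangle; apply: (has_triangle_of erw' _ erw).
  by rewrite -in_nbhd Nw' !inE (inner w wqs wX) eq_sym dc cX.
have [qX | qX] := boolP (q \in X); have [sX | sX] := boolP (s \in X).
- by move: qs; rewrite (inner q _ qX) ?set21 // (inner s _ sX) ?set22 // eqxx.
- exact: mixed (set21 q s) (set22 q s) qX sX.
- exact: mixed (set22 q s) (set21 q s) sX qX.
have [c' /setD1P [c'c c'X] Nq] := outer' q (set21 q s) qX.
have [c'' /setD1P [c''c c''X] Ns] := outer' s (set22 q s) sX.
have c'c'' : c' != c'' by apply/eqP => E; apply: no_K23; apply: (twins_K23 qs); rewrite Nq Ns E.
have [[erq uq _] [ers us _]] := (other q (set21 q s), other s (set22 q s)).
apply: no_domino; apply: (domino_of _ eru erq ers uX qX sX c'X c''X _ Nu Nq Ns).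
  by rewrite /= !inE !negb_or eq_sym uq eq_sym us qs.
by rewrite eq_sym c'c eq_sym c''c c'c''.
Qed.

Lemma attached_independent (X W : {set T}) :
  #|X| <= 4 ->
  (forall v, v \in W :\: X -> nbhd e v \subset X) ->
  (forall v, v \in W :&: X -> nbhd e v \subset X :|: W) ->
  {in W &, forall y z, ~~ e y z}.
Proof.
move=> X4 Wout Win y z yW zW; apply/negP => eyz.
have [Y XY Y4] : exists2 Y : {set T}, X \subset Y & #|Y| = 4.
  by apply: superset_card; rewrite X4 (four_le_card y).
have WY v : v \in W -> nbhd e v \subset Y.
  move=> vW; have [vX | vX] := boolP (v \in X); last first.
    by apply: subset_trans XY; apply: Wout; rewrite inE vX vW.
  apply: nbhd_sub_of_outer Y4 (subsetP XY v vX) _ => q /setDP [qN qY].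
  have qX : q \notin X by apply: contra qY; apply: (subsetP XY).
  have qW : q \in W.
    by have := subsetP (Win v _) q qN; rewrite inE vW vX in_setU (negbTE qX); apply.
  by apply: subset_trans XY; apply: Wout; rewrite inE qX qW.
exact: no_triangle (triangle_of_closed_edge Y4 eyz (WY y yW) (WY z zW)).
Qed.

Section Decomposition.

Variables (I : finType) (t : rel I) (B : I -> {set T}).
Hypotheses (dec : tree_decomposition e t B) (width : forall i, #|B i| <= 4).

Lemma branch_separates i j k l v :
  t i j -> k \in branch t i j -> l \notin branch t i j -> v \in B k -> v \in B l ->
  (v \in B i) && (v \in B j).
Proof.
case: dec => _ _ _ subtree tij kb lb vk vl.
suff : l \in branch t i j \/ (v \in B i) && (v \in B j).
  by case=> // lb'; rewrite lb' in lb.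
apply: (connect_ind (P := fun x => x \in branch t i j \/ (v \in B i) && (v \in B j)))
  (subtree v k l vk vl); first by left.
move=> a b _ [ab | ->] /and3P [tab va vb]; last by right.
case cut : [|| (a == i) && (b == j) | (a == j) && (b == i)].
  by right; case/orP: cut => /andP [/eqP <- /eqP <-]; rewrite ?va ?vb.
left; move: ab; rewrite !inE => ab; apply: (connect_trans ab); apply: connect1.
by rewrite /tree_del /= tab cut.
Qed.

Definition below (j p : I) : {set T} :=
  [set v | [exists k in branch t j p, v \in B k] & v \notin B p].

Lemma mem_below j p k v :
  k \in branch t j p -> v \in B k -> v \notin B p -> v \in below j p.
Proof. by move=> kb vk vp; rewrite inE vp andbT; apply/existsP; exists k; rewrite kb. Qed.

Lemma below_edge j p v u : t j p -> v \in below j p -> e v u ->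
  exists2 m, m \in branch t j p & (u \in B m) && (v \in B m).
Proof.
move=> tjp; rewrite inE => /andP [/existsP [k /andP [kb vk]] vp] evu.
case: dec => _ _ edge_cov _; have [m /andP [vm um]] := edge_cov v u evu.
have [mb | mb] := boolP (m \in branch t j p); first by exists m; rewrite ?um ?vm.
by have := branch_separates tjp kb mb vk vm; rewrite (negbTE vp) andbF.
Qed.

Lemma below_nbhd j p v : t j p -> v \in below j p -> nbhd e v \subset B p.
Proof.
case: (dec) => tree_t _ _ _; have [[tsym _] _ _ _] := tree_t.
have [n] := ubnP #|branch t j p|; elim: n j p v => [|n IH] j p v; first by rewrite ltn0.
move=> lt_n tjp vb; have pNb := branch_notin tree_t tjp.
have Wout w : w \in below j p :\: B j -> nbhd e w \subset B j.
  rewrite !inE => /andP [wj /andP [/existsP [k /andP [kb wk]] _]].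
  have kj : k != j by apply: contraNneq wj => <-.
  have sub : subrel (tree_del t j p) t by move=> x y /andP [].
  move: kb; rewrite inE => /(branch_cover tree_t sub)/(_ kj) [k' /andP [tjk' k'p] kk'].
  rewrite eqxx /= in k'p; case/norP: k'p => k'p _.
  have lt : #|branch t k' j| < n.
    by rewrite -ltnS; apply: leq_trans lt_n; apply/proper_card/branch_proper.
  by apply: (IH k' j w lt); [rewrite tsym | exact: mem_below kk' wk wj].
have Win w : w \in below j p :&: B j -> nbhd e w \subset B j :|: below j p.
  rewrite inE => /andP [wb _]; apply/subsetP => u; rewrite in_nbhd => ewu.
  have [m mb /andP [um wm]] := below_edge tjp wb ewu.
  rewrite inE; have [up | up] := boolP (u \in B p).
    by have /andP [-> _] := branch_separates tjp mb pNb um up.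
  by rewrite (mem_below mb um up) orbT.
apply/subsetP => u; rewrite in_nbhd => evu.
have [m mb /andP [um _]] := below_edge tjp vb evu.
apply/negPn/negP => up.
by have := attached_independent (width j) Wout Win vb (mem_below mb um up); rewrite evu.
Qed.

Lemma edgeless y z : ~~ e y z.
Proof.
case: dec => tree_t cover _ _; have [[tsym _] I0 connected_t _] := tree_t.
have [j _] := card_gt0P I0.
have out v : v \in [set: T] :\: B j -> nbhd e v \subset B j.
  rewrite !inE andbT => vj; have [k vk] := cover v.
  have kj : k != j by apply: contraNneq vj => <-.
  have [k' tjk' kk'] := branch_cover tree_t (fun _ _ => id) (connected_t j k) kj.
  by apply: (@below_nbhd k' j); [rewrite tsym | exact: mem_below kk' vk vj].
have all_in v : v \in [set: T] :&: B j -> nbhd e v \subset B j :|: [set: T].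
  by rewrite setUT subsetT.
by apply: (attached_independent (width j) out all_in); rewrite inE.
Qed.

End Decomposition.

End CubicGraph.

Theorem lemma28 (T : finType) (e : rel T) :
  simple_graph e -> 0 < #|T| -> cubic e -> treewidth_le e 3 ->
  has_triangle e \/ has_K23 e \/ has_domino e.
Proof.
move=> simple_e T0 cubic_e [I [t [B [dec width]]]].
apply: NNPP => no_subgraph.
have no_triangle : ~ has_triangle e by move=> ?; apply: no_subgraph; left.
have no_K23 : ~ has_K23 e by move=> ?; apply: no_subgraph; right; left.
have no_domino : ~ has_domino e by move=> ?; apply: no_subgraph; right; right.
have [v _] := card_gt0P T0.
have /card_gt0P [u] : 0 < #|nbhd e v| by rewrite card_nbhd.
rewrite in_nbhd => evu.
by have := edgeless simple_e cubic_e no_triangle no_K23 no_domino dec width v u; rewrite evu.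
Qed.
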